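(* Let $\mathbb{F}$, $\mathfrak g$, $\mathcal C$, $\mathcal C^{du}$, $M$ be as in the context, and assume the pair $\mathcal C,\mathcal C^{du}$ is good for integrating $\mathfrak g$. Let $V$ be an object of $\mathcal C$. Then every $M$-invariant subspace $U$ of $V$ which is closed in the Zariski topology of $V$ is $\mathfrak g$-invariant.
   Context: Let $\mathbb F$ be a field of characteristic $0$, $\mathfrak g$ a Lie algebra over $\mathbb F$. $\mathcal C$: full subcategory of $\mathfrak g$-modules closed under isomorphism and submodules, containing a direct sum and tensor product of any two objects and a one-dimensional trivial module, with only $0\in\mathfrak g$ acting trivially on all objects. $x_V$ = action. Category of duals: point-separating $V^{du}\subseteq V^*$ with $\phi\circ x_V\in V^{du}$ ($x\in\mathfrak g$), $\psi\circ\alpha\in V^{du}$ for morphisms $\alpha:V\to W$, $\psi\in W^{du}$, $(V\oplus W)^{du}=V^{du}\oplus W^{du}$, $V^{du}\otimes W^{du}\subseteq(V\otimes W)^{du}$. $End_{V^{du}}(V)=\{\varphi:\phi\circ\varphi\in V^{du}\ \forall\phi\}$. $Nat$: families $(m_V)_V$, $m_V\in End_{V^{du}}(V)$, commuting with all morphisms. $M=\{m\in Nat:m_{V\otimes W}=m_V\otimes m_W,\ m_{V_0}=id$ for trivial one-dimensional $V_0\}$, acting on $V$ by $m\cdot v=m_Vv$. $\mathbb F[M]=\{f_{\phi v}\}$, $f_{\phi v}(m)=\phi(m_Vv)$. $Lie(M)=\{x\in Nat:x_{V\otimes W}=x_V\otimes id+id\otimes x_W,\ x_{V_0}=0,\ \exists\,\delta_x:\mathbb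 F[M]\to\mathbb F$ with $\delta_x(f_{\phi v})=\phi(x_Vv)\}$. Identify $\mathfrak g$ with $\{(x_V)_V\}\subseteq Nat$; good for integrating means $\mathfrak g\subseteq Lie(M)$. The Zariski topology on $V$: closed sets are common zero sets of subsets of $\mathbb F[V]$, the algebra of functions on $V$ generated by $V^{du}$. *)

From HB Require Import structures.
From mathcomp Require Import all_boot all_order all_algebra.
Set Implicit Arguments. Unset Strict Implicit. Unset Printing Implicit Defensive.
Import GRing.Theory.
Local Open Scope ring_scope.

Section Defs.
Variable F : fieldType.

Definition lin (U V : lmodType F) (f : U -> V) : Prop :=
  forall (a : F) (u v : U), f (a *: u + v) = a *: f u + f v.

Definition linF (U : lmodType F) (f : U -> F) : Prop :=
  forall (a : F) (u v : U), f (a *: u + v) = a * f u + f v.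

Definition bilin (U V W : lmodType F) (b : U -> V -> W) : Prop :=
  (forall v, lin (fun u => b u v)) /\ (forall u, lin (b u)).

Record LieAlg := {
  lie_car :> lmodType F;
  lie_br : lie_car -> lie_car -> lie_car;
  lie_br_bilin : bilin lie_br;
  lie_br_alt : forall x, lie_br x x = 0;
  lie_jacobi : forall x y z,
    lie_br x (lie_br y z) + lie_br y (lie_br z x) + lie_br z (lie_br x y) = 0 }.

Variable g : LieAlg.

Record gmod := {
  gcar :> lmodType F;
  gact : g -> gcar -> gcar;
  gact_bilin : bilin gact;
  gact_br : forall x y v,
    gact (lie_br x y) v = gact x (gact y v) - gact y (gact x v) }.

Definition xV (V : gmod) (x : g) : V -> V := @gact V x.

Definition is_morph (V W : gmod) (a : V -> W) : Prop :=
  lin a /\ forall x v, a (gact x v) = gact x (a v).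

Definition is_iso (V W : gmod) (a : V -> W) : Prop :=
  is_morph a /\ exists b : W -> V, is_morph b /\ cancel a b /\ cancel b a.

Definition is_dsum (V W S : gmod) (i1 : V -> S) (i2 : W -> S)
    (p1 : S -> V) (p2 : S -> W) : Prop :=
  [/\ is_morph i1, is_morph i2, is_morph p1, is_morph p2 &
      [/\ cancel i1 p1, cancel i2 p2, (forall w, p1 (i2 w) = 0),
          (forall v, p2 (i1 v) = 0) & (forall s, i1 (p1 s) + i2 (p2 s) = s)]].

Definition is_tensor (V W T : gmod) (b : V -> W -> T) : Prop :=
  [/\ bilin b,
      (forall x v w, gact x (b v w) = b (gact x v) w + b v (gact x w)) &
      (forall (X : lmodType F) (f : V -> W -> X), bilin f ->
         (exists h : T -> X, lin h /\ forall v w, h (b v w) = f v w) /\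
         (forall h1 h2 : T -> X, lin h1 -> lin h2 ->
            (forall v w, h1 (b v w) = f v w) -> (forall v w, h2 (b v w) = f v w) ->
            forall t, h1 t = h2 t))].

Definition trivial1 (V0 : gmod) : Prop :=
  (exists e : V0, e != 0 /\ forall v : V0, exists c : F, v = c *: e) /\
  (forall x (v : V0), gact x v = 0).

Definition is_category (C : gmod -> Prop) : Prop :=
  [/\
      (forall (V W : gmod) (a : V -> W), C V -> is_iso a -> C W),
      (* closed under submodules (images of injective morphisms) *)
      (forall (V W : gmod) (a : W -> V), C V -> is_morph a -> injective a -> C W),
      (forall V W : gmod, C V -> C W -> exists (S : gmod) (i1 : V -> S) (i2 : W -> S) p1 p2,
          C S /\ is_dsum i1 i2 p1 p2),
      (forall V W : gmod, C V -> C W -> exists (T : gmod) (b : V -> W -> T), C T /\ is_tensor b) &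
      (
          (exists V0 : gmod, C V0 /\ trivial1 V0) /\
          (forall x : g, (forall V : gmod, C V -> forall v : V, gact x v = 0) -> x = 0))].

Definition subspace (V : lmodType F) (U : V -> Prop) : Prop :=
  U 0 /\ forall (a : F) u v, U u -> U v -> U (a *: u + v).

(* A category of duals: V^du is given by du V. *)
Definition is_duals (C : gmod -> Prop) (du : forall V : gmod, (V -> F) -> Prop) : Prop :=
  forall V : gmod, C V ->
  [/\
      (forall phi, du V phi -> linF phi) /\
        (du V (fun _ => 0) /\ forall (a : F) phi psi, du V phi -> du V psi ->
           du V (fun v => a * phi v + psi v)),
      (forall v : V, v != 0 -> exists phi, du V phi /\ phi v != 0),
      (forall phi x, du V phi -> du V (fun v => phi (gact x v))),
      (forall (W : gmod) (a : V -> W) psi, C W -> is_morph a -> du W psi ->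
          du V (fun v => psi (a v))) &
      forall W : gmod, C W ->
      (
          (forall (S : gmod) (i1 : V -> S) (i2 : W -> S) p1 p2, C S -> is_dsum i1 i2 p1 p2 ->
             forall chi : S -> F, linF chi ->
             (du S chi <-> (du V (fun v => chi (i1 v)) /\ du W (fun w => chi (i2 w))))) /\
          (forall (T : gmod) (b : V -> W -> T), C T -> is_tensor b ->
             forall phi psi (chi : T -> F), du V phi -> du W psi -> linF chi ->
             (forall v w, chi (b v w) = phi v * psi w) -> du T chi))].

Definition family := forall V : gmod, V -> V.

Definition End_du (du : forall V : gmod, (V -> F) -> Prop) (V : gmod) (f : V -> V) : Prop :=
  lin f /\ forall phi, du V phi -> du V (fun v => phi (f v)).

Definition Nat (C : gmod -> Prop) du (m : family) : Prop :=
  (forall V : gmod, C V -> End_du du (m V)) /\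
  (forall (V W : gmod) (a : V -> W), C V -> C W -> is_morph a ->
      forall v, a (m V v) = m W (a v)).

Definition inM (C : gmod -> Prop) du (m : family) : Prop :=
  [/\ Nat C du m,
      (forall (V W T : gmod) (b : V -> W -> T), C V -> C W -> C T -> is_tensor b ->
          forall v w, m T (b v w) = b (m V v) (m W w)) &
      (forall V0 : gmod, C V0 -> trivial1 V0 -> forall v, m V0 v = v)].

(* Lie(M); the existence of delta_x : F[M] -> F with
   delta_x (f_{phi v}) = phi (x_V v), where F[M] = {f_{phi v}} and
   f_{phi v}(m) = phi (m_V v), is the well-definedness of this assignment. *)
Definition inLieM (C : gmod -> Prop) du (x : family) : Prop :=
  [/\ Nat C du x,
      (forall (V W T : gmod) (b : V -> W -> T), C V -> C W -> C T -> is_tensor b ->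
          forall v w, x T (b v w) = b (x V v) w + b v (x W w)),
      (forall V0 : gmod, C V0 -> trivial1 V0 -> forall v, x V0 v = 0) &
      (forall (V W : gmod) (phi : V -> F) (v : V) (psi : W -> F) (w : W),
          C V -> C W -> du V phi -> du W psi ->
          (forall m, inM C du m -> phi (m V v) = psi (m W w)) ->
          phi (x V v) = psi (x W w))].

(* g is identified with the families (x_V)_V; good for integrating: g <= Lie(M) *)
Definition good_for_integrating (C : gmod -> Prop) du : Prop :=
  forall x : g, inLieM C du (fun V => @xV V x).

Inductive polyfun du (V : gmod) : (V -> F) -> Prop :=
  | pf_du phi : du V phi -> polyfun du phi
  | pf_cst (c : F) : polyfun du (fun _ => c)
  | pf_add f1 f2 : polyfun du f1 -> polyfun du f2 -> polyfun du (fun v => f1 v + f2 v)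
  | pf_mul f1 f2 : polyfun du f1 -> polyfun du f2 -> polyfun du (fun v => f1 v * f2 v).

Definition zariski_closed du (V : gmod) (U : V -> Prop) : Prop :=
  exists S : (V -> F) -> Prop, (forall f, S f -> polyfun du f) /\
    (forall v, U v <-> forall f, S f -> f v = 0).

Definition M_invariant (C : gmod -> Prop) du (V : gmod) (U : V -> Prop) : Prop :=
  forall m, inM C du m -> forall v, U v -> U (m V v).

End Defs.

From mathcomp Require Import all_boot all_order all_algebra.
From Stdlib Require Import Classical.
Set Implicit Arguments. Unset Strict Implicit. Unset Printing Implicit Defensive.
Import GRing.Theory.
Local Open Scope ring_scope.

(** If a functional phi of V^du vanishes on U, then f_{phi v} vanishes on M
    for every v in U, because U is M-invariant; since x lies in Lie(M), the
    derivation delta_x kills it, i.e. phi (x v) = 0.  So x v lies in the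
    common kernel of the functionals of V^du annihilating U.  A polynomial
    function depends on finitely many functionals, and on finitely many
    functionals every point of that common kernel agrees with a point of U;
    hence every polynomial vanishing on U vanishes at x v, and a Zariski
    closed U contains x v. *)

Section LinearFunctionals.
Variables (F : fieldType) (V : lmodType F).

Lemma linF0 (phi : V -> F) : linF phi -> phi 0 = 0.
Proof.
move=> linphi; apply: (addrI (phi 0)); rewrite addr0.
by have := linphi 1 0 0; rewrite scale1r addr0 mul1r.
Qed.

Lemma linFZ (phi : V -> F) a u : linF phi -> phi (a *: u) = a * phi u.
Proof. by move=> linphi; rewrite -[a *: u]addr0 linphi (linF0 linphi) addr0. Qed.

Lemma linFD (phi : V -> F) u v : linF phi -> phi (u + v) = phi u + phi v.
Proof. by move=> linphi; have := linphi 1 u v; rewrite scale1r mul1r. Qed.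

Lemma linFB (phi : V -> F) u v : linF phi -> phi (u - v) = phi u - phi v.
Proof. by move=> linphi; rewrite addrC -scaleN1r linphi mulN1r addrC. Qed.

Lemma subspaceZ (U : V -> Prop) a u : subspace U -> U u -> U (a *: u).
Proof. by case=> U0 UD Uu; rewrite -[a *: u]addr0; apply: UD. Qed.

Lemma subspaceD (U : V -> Prop) u v : subspace U -> U u -> U v -> U (u + v).
Proof. by case=> _ UD Uu Uv; rewrite -[u]scale1r; apply: UD. Qed.

Lemma subspace_kernel (U : V -> Prop) (phi : V -> F) :
  subspace U -> linF phi -> subspace (fun u => U u /\ phi u = 0).
Proof.
move=> [U0 UD] linphi; split; first by rewrite linF0.
move=> a u v [Uu phiu] [Uv phiv]; split; first exact: UD.
by rewrite linphi phiu phiv mulr0 addr0.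
Qed.

End LinearFunctionals.

Section WeakClosure.
Variables (F : fieldType) (V : lmodType F) (D : (V -> F) -> Prop).
Hypothesis linD : forall phi, D phi -> linF phi.
Hypothesis combD : forall (a : F) phi psi, D phi -> D psi ->
  D (fun v => a * phi v + psi v).

Definition weak_closure (U : V -> Prop) (w : V) : Prop :=
  forall phi, D phi -> (forall u, U u -> phi u = 0) -> phi w = 0.

(* U is the direct sum of its part in ker phi and the line through u1. *)
Lemma weak_closure_kernel (U : V -> Prop) w phi u1 :
  subspace U -> D phi -> U u1 -> phi u1 = 1 -> weak_closure U w ->
  weak_closure (fun u => U u /\ phi u = 0) (w - phi w *: u1).
Proof.
move=> [_ combU] Dphi Uu1 phiu1 wclw chi Dchi chi_ker.
have [linphi linchi] := (linD Dphi, linD Dchi).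
have chiU u : U u -> chi u = phi u * chi u1.
  move=> Uu; have ker_u : U (- phi u *: u1 + u) /\ phi (- phi u *: u1 + u) = 0.
    by split; [apply: combU | rewrite linphi phiu1 mulr1 addNr].
  have /eqP := chi_ker _ ker_u.
  by rewrite linchi mulNr addrC subr_eq0 => /eqP.
have chi'U u : U u -> - chi u1 * phi u + chi u = 0.
  by move=> Uu; rewrite (chiU u Uu) mulNr mulrC addNr.
have /eqP := wclw _ (combD (- chi u1) Dphi Dchi) chi'U.
by rewrite mulNr addrC subr_eq0 linFB // linFZ // => /eqP ->; rewrite mulrC subrr.
Qed.

Lemma weak_closure_interpolate n (phi : 'I_n -> V -> F) (U : V -> Prop) w :
  subspace U -> (forall i, D (phi i)) -> weak_closure U w ->
  exists2 u, U u & forall i, phi i u = phi i w.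
Proof.
elim: n phi U w => [|n IHn] phi U w subU Dphi wclw.
  by exists 0; [case: subU | case].
pose phi0 := phi ord0; pose phi' i := phi (lift ord0 i).
have agreeS u : phi0 u = phi0 w -> (forall i, phi' i u = phi' i w) ->
    forall i, phi i u = phi i w.
  by move=> E0 E' i; case: (unliftP ord0 i) => [j|] ->; [apply: E' | apply: E0].
have [[u1 [Uu1 phiu1]] | phi0_ann] :=
  classic (exists u1, U u1 /\ phi0 u1 != 0); last first.
  have phi0U u : U u -> phi0 u = 0.
    by move=> Uu; apply: NNPP => /eqP nz; apply: phi0_ann; exists u.
  have [u Uu Eu] := IHn phi' U w subU (fun i => Dphi _) wclw.
  exists u => //; apply: agreeS => //.
  by rewrite (phi0U u Uu); symmetry; apply: wclw (Dphi ord0) phi0U.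
have linphi0 : linF phi0 := linD (Dphi ord0).
pose u2 := (phi0 u1)^-1 *: u1.
have Uu2 : U u2 by apply: subspaceZ.
have phiu2 : phi0 u2 = 1 by rewrite linFZ // mulVf.
have [u Uu Eu] := IHn phi' _ _ (subspace_kernel subU linphi0) (fun i => Dphi _)
  (weak_closure_kernel subU (Dphi ord0) Uu2 phiu2 wclw).
case: Uu => Uu phi0u; exists (u + phi0 w *: u2).
  by apply: subspaceD; last exact: subspaceZ.
apply: agreeS => [|i]; first by rewrite linFD // linFZ // phi0u phiu2 mulr1 add0r.
have linphi' : linF (phi' i) := linD (Dphi _).
by rewrite linFD // Eu linFB // subrK.
Qed.

Definition finitely_determined (f : V -> F) : Prop :=
  exists n (phi : 'I_n -> V -> F), (forall i, D (phi i)) /\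
    forall a b, (forall i, phi i a = phi i b) -> f a = f b.

Lemma finitely_determined_op (op : F -> F -> F) f1 f2 :
  finitely_determined f1 -> finitely_determined f2 ->
  finitely_determined (fun v => op (f1 v) (f2 v)).
Proof.
move=> [n1 [phi1 [D1 E1]]] [n2 [phi2 [D2 E2]]].
exists (n1 + n2), (fun i => match split i with inl j => phi1 j | inr k => phi2 k end).
split=> [i | a b E]; first by case: (split i).
congr op; [apply: E1 => j | apply: E2 => k].
  by have := E (unsplit (inl j)); rewrite unsplitK.
by have := E (unsplit (inr k)); rewrite unsplitK.
Qed.

End WeakClosure.

Section ZariskiClosure.
Variables (F : fieldType) (g : LieAlg F) (du : forall V : gmod g, (V -> F) -> Prop).
Arguments du : clear implicits.

Lemma polyfun_finitely_determined (V : gmod g) (f : V -> F) :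
  polyfun du f -> finitely_determined (du V) f.
Proof.
elim=> [phi Dphi | c | f1 f2 _ fd1 _ fd2 | f1 f2 _ fd1 _ fd2].
- by exists 1%N, (fun _ => phi); split=> // a b /(_ ord0).
- by exists 0%N, (fun _ _ => c); split=> [[]|].
- exact: finitely_determined_op.
- exact: finitely_determined_op.
Qed.

Lemma zariski_closed_weak_closure (V : gmod g) (U : V -> Prop) w :
  (forall phi, du V phi -> linF phi) ->
  (forall (a : F) phi psi, du V phi -> du V psi -> du V (fun v => a * phi v + psi v)) ->
  subspace U -> zariski_closed du U -> weak_closure (du V) U w -> U w.
Proof.
move=> linD combD subU [S [Spoly defU]] wclw; apply/defU => f Sf.
have [n [phi [Dphi Ef]]] := polyfun_finitely_determined (Spoly f Sf).
have [u Uu Eu] := weak_closure_interpolate linD combD subU Dphi wclw.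
by rewrite -(Ef _ _ Eu); apply: (proj1 (defU u)).
Qed.

Lemma lie_action_weak_closure (C : gmod g -> Prop) (V : gmod g) (U : V -> Prop) x v :
  good_for_integrating C du -> C V -> du V (fun _ => 0) ->
  M_invariant C du U -> U v -> weak_closure (du V) U (gact x v).
Proof.
move=> good CV D0 MU Uv phi Dphi phi_ann.
have [_ _ _ delta_x] := good x.
by apply: (delta_x V V phi v _ v CV CV Dphi D0) => m Mm; rewrite phi_ann //; apply: MU.
Qed.

End ZariskiClosure.

Theorem theorem2p12 (F : fieldType) (charF0 : [pchar F] =i pred0)
  (g : LieAlg F) (C : gmod g -> Prop)
  (du : forall V : gmod g, (V -> F) -> Prop) :
  is_category C -> is_duals C du -> good_for_integrating C du ->
  forall V : gmod g, C V ->
  forall U : V -> Prop, subspace U -> M_invariant C du U -> zariski_closed du U ->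
  forall (x : g) (v : V), U v -> U (gact x v).
Proof.
move=> _ duals good V CV U subU MU closedU x v Uv.
have [[linD [D0 combD]] _ _ _ _] := duals V CV.
apply: zariski_closed_weak_closure linD combD subU closedU _.
exact: lie_action_weak_closure good CV D0 MU Uv.
Qed.
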